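(* Let $\mathcal{H}$ be an infinite-dimensional separable Hilbert space with inner product $\langle\cdot,\cdot\rangle$ (linear in the second argument), let $\mathcal{D}\subseteq\mathcal{H}$ be a dense subspace, and let $\mathcal{F}_\varphi=\{\varphi_n\}_{n\ge0}$, $\mathcal{F}_\psi=\{\psi_n\}_{n\ge0}$ be biorthogonal families, $\langle\varphi_n,\psi_k\rangle=\delta_{n,k}$, both complete in $\mathcal{H}$, with $\varphi_n,\psi_n\in\mathcal{D}$ for all $n$. Let $H$ be an operator with $D(H)\supseteq\mathcal{D}$ and $D(H^\dagger)\supseteq\mathcal{D}$. (i) $H$ is $(\varphi,\psi)$-tridiagonal if and only if $H^\dagger$ is $(\psi,\varphi)$-tridiagonal. (ii) Suppose moreover that $\mathcal{F}_\varphi,\mathcal{F}_\psi$ are biorthogonal Riesz bases, i.e. there exist an orthonormal basis $\{e_n\}_{n\ge0}$ of $\mathcal{H}$ with $e_n\in\mathcal{D}$ for all $n$ and a bounded operator $R$ with bounded inverse such that $\varphi_n=Re_n$, $\psi_n=(R^{-1})^\dagger e_n$, where $\mathcal{D}$ is stable under $R$, $R^\dagger$, $R^{-1}$, $(R^{-1})^\dagger$; and suppose $H$ leaves $\mathcal{D}$ stable. Then $H$ is $(\varphi,\psi)$-tridiagonal if and only if $H_0:=R^{-1}HR$ is $(e,e)$-tridiagonal.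
   Context: Definition: for families $\{f_n\}_{n\ge0}$, $\{g_n\}_{n\ge0}$ and an operator $K$ whose domain contains all $f_m$, $K$ is called $(f,g)$-tridiagonal if there exist three sequences of complex numbers $\{b_n\},\{a_n\},\{b_n'\}$ such that $\langle g_n,Kf_m\rangle=b_n\delta_{n,m+1}+a_n\delta_{n,m}+b_n'\delta_{n,m-1}$ for all $n,m\ge0$. $K$ is called $(e,e)$-tridiagonal (or $e$-tridiagonal) when $f_n=g_n=e_n$. No self-adjointness and no relation between $\{b_n\}$ and $\{b_n'\}$ is assumed. *)

From mathcomp Require Import all_boot all_order all_algebra.
From mathcomp Require Import reals.
From mathcomp.real_closed Require Import complex.

Set Implicit Arguments.
Unset Strict Implicit.
Unset Printing Implicit Defensive.

Import Order.TTheory GRing.Theory Num.Theory ComplexField.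
Local Open Scope ring_scope.

Section Hilbert.
Variables (R : realType) (V : lmodType R[i]) (ip : V -> V -> R[i]).

Definition inner_product_ax : Prop :=
  [/\ (forall (a : R[i]) (x y z : V), ip x (a *: y + z) = a * ip x y + ip x z),
      (forall x y : V, ip y x = (ip x y)^*),
      (forall x : V, 0 <= ip x x) &
      (forall x : V, ip x x = 0 -> x = 0)].

Definition hnorm (x : V) : R := Num.sqrt (complex.Re (ip x x)).

Definition norm_complete : Prop :=
  forall u : nat -> V,
    (forall eps : R, 0 < eps -> exists N : nat, forall n m : nat,
        (N <= n)%N -> (N <= m)%N -> hnorm (u n - u m) < eps) ->
    exists l : V, forall eps : R, 0 < eps -> exists N : nat, forall n : nat,
        (N <= n)%N -> hnorm (u n - l) < eps.

Definition separable : Prop :=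
  exists d : nat -> V, forall (x : V) (eps : R), 0 < eps ->
    exists n : nat, hnorm (x - d n) < eps.

Definition infinite_dimensional : Prop :=
  forall (n : nat) (v : 'I_n -> V), exists x : V,
    forall c : 'I_n -> R[i], x <> \sum_(i < n) c i *: v i.

Definition inf_dim_sep_hilbert : Prop :=
  [/\ inner_product_ax, norm_complete, separable & infinite_dimensional].

Definition subspace (D : V -> Prop) : Prop :=
  D 0 /\ forall (a : R[i]) (x y : V), D x -> D y -> D (a *: x + y).

Definition dense (D : V -> Prop) : Prop :=
  forall (x : V) (eps : R), 0 < eps -> exists y : V, D y /\ hnorm (x - y) < eps.

Definition biorthogonal (phi psi : nat -> V) : Prop :=
  forall n k : nat, ip (phi n) (psi k) = (n == k)%:R.

Definition complete_family (f : nat -> V) : Prop :=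
  forall x : V, (forall n, ip (f n) x = 0) -> x = 0.

Definition orthonormal_basis (e : nat -> V) : Prop :=
  (forall n k : nat, ip (e n) (e k) = (n == k)%:R) /\ complete_family e.

Record operator := Operator { dom : V -> Prop; app : V -> V }.

Definition linear_operator (H : operator) : Prop :=
  subspace (dom H) /\
  forall (a : R[i]) (x y : V), dom H x -> dom H y ->
    app H (a *: x + y) = a *: app H x + app H y.

Definition is_adjoint (H Hd : operator) : Prop :=
  (forall y : V, dom Hd y <->
     exists z : V, forall x : V, dom H x -> ip y (app H x) = ip z x) /\
  (forall y : V, dom Hd y -> forall x : V, dom H x ->
     ip (app Hd y) x = ip y (app H x)).

Definition tridiagonal (f g : nat -> V) (K : operator) : Prop :=
  (forall m, dom K (f m)) /\
  exists b a b' : nat -> R[i], forall n m : nat,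
    ip (g n) (app K (f m)) =
      b n * (n == m.+1)%:R + a n * (n == m)%:R + b' n * (n.+1 == m)%:R.

Definition linear_map (T : V -> V) : Prop :=
  forall (a : R[i]) (x y : V), T (a *: x + y) = a *: T x + T y.

Definition bounded_map (T : V -> V) : Prop :=
  exists M : R, forall x : V, hnorm (T x) <= M * hnorm x.

Definition adjoint_map (T Td : V -> V) : Prop :=
  forall x y : V, ip (Td y) x = ip y (T x).

Definition conj_operator (Rinv : V -> V) (H : operator) (Rop : V -> V) : operator :=
  Operator (fun x => dom H (Rop x)) (fun x => Rinv (app H (Rop x))).

End Hilbert.

From mathcomp Require Import all_boot all_order all_algebra.
From mathcomp Require Import reals zify.
From mathcomp.real_closed Require Import complex.
Import GRing.Theory Num.Theory ComplexField.
Local Open Scope ring_scope.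

(* Since the three diagonals {b_n}, {a_n}, {b'_n} are unconstrained,
   (f,g)-tridiagonality only says that the matrix <g_n, K f_m> vanishes off
   the band |n - m| <= 1.  For (i), the matrix of H^† with respect to (psi,phi)
   is the conjugate transpose of that of H with respect to (phi,psi), and the
   band is symmetric.  For (ii), <e_n, R^-1 H R e_m> = <psi_n, H phi_m>, so the
   two matrices coincide. *)

Section Tridiagonal.
Variables (R : realType) (V : lmodType R[i]) (ip : V -> V -> R[i]).

Lemma tridiagonalP (f g : nat -> V) (K : operator V) :
  tridiagonal ip f g K <->
  (forall m, dom K (f m)) /\
  (forall n m, (m.+1 < n)%N || (n.+1 < m)%N -> ip (g n) (app K (f m)) = 0).
Proof.
split=> -[hdom entries]; split=> //.
- move=> n m off_band; case: entries => b [a [b' ->]].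
  have [-> -> ->] : [/\ n == m.+1 = false, n == m = false & n.+1 == m = false].
    by split; lia.
  by rewrite !mulr0 !addr0.
- exists (fun n => ip (g n) (app K (f n.-1))), (fun n => ip (g n) (app K (f n))),
    (fun n => ip (g n) (app K (f n.+1))) => n m.
  have [->|n_Sm] := eqVneq n m.+1.
    have [-> ->] : m.+1 == m = false /\ m.+2 == m = false by split; lia.
    by rewrite !mulr0 !addr0 mulr1.
  have [->|n_m] := eqVneq n m.
    have -> : m.+1 == m = false by lia.
    by rewrite !mulr0 addr0 add0r mulr1.
  have [<-|Sn_m] := eqVneq n.+1 m; first by rewrite !mulr0 !add0r mulr1.
  rewrite !mulr0 !addr0 entries //.
  by move: n_Sm n_m Sn_m; lia.
Qed.

Lemma eq_tridiagonal (f g f' g' : nat -> V) (K K' : operator V) :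
  (forall m, dom K (f m) <-> dom K' (f' m)) ->
  (forall n m, ip (g n) (app K (f m)) = ip (g' n) (app K' (f' m))) ->
  tridiagonal ip f g K <-> tridiagonal ip f' g' K'.
Proof.
move=> hdom hentry; rewrite !tridiagonalP.
split=> -[hd entries]; split=> [m|n m off_band]; try exact/hdom.
- by rewrite -hentry entries.
- by rewrite hentry entries.
Qed.

Lemma tridiagonal_conj_transpose (f g f' g' : nat -> V) (K K' : operator V) :
  (forall m, dom K (f m)) -> (forall m, dom K' (f' m)) ->
  (forall n m, ip (g' n) (app K' (f' m)) = (ip (g m) (app K (f n)))^*) ->
  tridiagonal ip f g K <-> tridiagonal ip f' g' K'.
Proof.
move=> hd hd' hentry; rewrite !tridiagonalP.
split=> -[_ entries]; split=> // n m off_band.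
- by rewrite hentry entries ?conjC0 // orbC.
- by rewrite -[ip _ _]conjCK -hentry entries ?conjC0 // orbC.
Qed.

Lemma adjoint_entry (H Hd : operator V) (x y : V) :
  (forall u v : V, ip v u = (ip u v)^*) -> is_adjoint ip H Hd ->
  dom H x -> dom Hd y -> ip x (app Hd y) = (ip y (app H x))^*.
Proof. by move=> ip_conj [_ hadj] hx hy; rewrite ip_conj hadj. Qed.

End Tridiagonal.

Theorem lemma2 (R : realType) (V : lmodType R[i]) (ip : V -> V -> R[i])
  (hV : inf_dim_sep_hilbert ip)
  (D : V -> Prop) (hDsub : subspace D) (hDdense : dense ip D)
  (phi psi : nat -> V)
  (hbi : biorthogonal ip phi psi)
  (hphic : complete_family ip phi) (hpsic : complete_family ip psi)
  (hphiD : forall n, D (phi n)) (hpsiD : forall n, D (psi n))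
  (H Hd : operator V)
  (hHlin : linear_operator H) (hHd : is_adjoint ip H Hd)
  (hDH : forall x, D x -> dom H x) (hDHd : forall x, D x -> dom Hd x) :
  (tridiagonal ip phi psi H <-> tridiagonal ip psi phi Hd) /\
  (forall (e : nat -> V) (Rop Rinv Rd Rid : V -> V),
     orthonormal_basis ip e -> (forall n, D (e n)) ->
     linear_map Rop -> bounded_map ip Rop ->
     linear_map Rinv -> bounded_map ip Rinv ->
     cancel Rop Rinv -> cancel Rinv Rop ->
     adjoint_map ip Rop Rd -> adjoint_map ip Rinv Rid ->
     (forall n, phi n = Rop (e n)) -> (forall n, psi n = Rid (e n)) ->
     (forall x, D x -> D (Rop x)) -> (forall x, D x -> D (Rd x)) ->
     (forall x, D x -> D (Rinv x)) -> (forall x, D x -> D (Rid x)) ->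
     (forall x, D x -> D (app H x)) ->
     (tridiagonal ip phi psi H <->
      tridiagonal ip e e (conj_operator Rinv H Rop))).
Proof.
have [[_ ip_conj _ _] _ _ _] := hV.
split.
- apply: tridiagonal_conj_transpose => [m|m|n m]; first exact/hDH.
    exact/hDHd.
  by apply: adjoint_entry; [|exact: hHd|exact/hDH|exact/hDHd].
- move=> e Rop Rinv Rd Rid _ _ _ _ _ _ _ _ _ hRinv hphi hpsi _ _ _ _ _.
  apply: eq_tridiagonal => [m|n m]; first by rewrite /= hphi.
  by rewrite /= hphi hpsi; apply: hRinv.
Qed.
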